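(* Let $4.999\le r\le 5$ and $1\le\theta\le 2.13$, and let $q(x)=1-(r-\theta)x+(r-2\theta)x^2+\theta x^3$. Then all three roots of $q$ are real: one root $\alpha$ satisfies $\alpha<-1$, and the other two roots $\beta,\gamma$ satisfy $0<\gamma<0.56<\beta<1$.
   Context: Equivalently $q(x)=1+rx(x-1)+\theta x(x-1)^2=(1-x/\alpha)(1-x/\beta)(1-x/\gamma)$ with $\alpha,\beta,\gamma$ the roots of $q$. *)

From Stdlib Require Import Reals.
Open Scope R_scope.

Definition q (r theta x : R) : R :=
  1 - (r - theta) * x + (r - 2 * theta) * x ^ 2 + theta * x ^ 3.

(* q is positive at -1, 0 and 1 and negative at 0.56, so the intermediate value theorem gives
   roots gamma in (0, 0.56) and beta in (0.56, 1).  Two known roots of a cubic determine the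
   third, and q(-1) = theta (-1 - alpha) (-1 - beta) (-1 - gamma) > 0 forces alpha < -1. *)

From Stdlib Require Import Reals Lra Psatz.
Open Scope R_scope.

Lemma IVT_strict (f : R -> R) (a b : R) :
  continuity f -> a < b -> f a * f b < 0 -> exists z, a < z < b /\ f z = 0.
Proof.
  intros Hf Hab Hsign.
  destruct (IVT_cor f a b Hf) as [z [[Haz Hzb] Hz]]; try lra.
  exists z; split; [split|]; trivial.
  - destruct Haz as [ | <-]; trivial. rewrite Hz in Hsign. lra.
  - destruct Hzb as [ | ->]; trivial. rewrite Hz in Hsign. lra.
Qed.

Lemma affine_eq0_of_two_roots (k1 k0 u v : R) :
  u <> v -> k1 * u + k0 = 0 -> k1 * v + k0 = 0 -> k1 = 0 /\ k0 = 0.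
Proof.
  intros Huv Hu Hv.
  assert (Hk1 : k1 * (u - v) = 0) by lra.
  destruct (Rmult_integral _ _ Hk1) as [|Huv']; [|exfalso; lra].
  split; [trivial | subst; lra].
Qed.

(* The third root is read off Vieta's formula for the x^2 coefficient; the remaining
   difference is affine and vanishes at u and v. *)
Lemma cubic_factor_of_two_roots (a b c d u v : R) :
  a <> 0 -> u <> v ->
  a * u ^ 3 + b * u ^ 2 + c * u + d = 0 ->
  a * v ^ 3 + b * v ^ 2 + c * v + d = 0 ->
  exists w, forall x, a * x ^ 3 + b * x ^ 2 + c * x + d = a * (x - w) * (x - u) * (x - v).
Proof.
  intros Ha Huv Hu Hv.
  set (w := - b / a - u - v).
  set (k1 := c - a * (w * u + w * v + u * v)).
  set (k0 := d + a * w * u * v).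
  assert (Hdiff : forall x,
    a * x ^ 3 + b * x ^ 2 + c * x + d - a * (x - w) * (x - u) * (x - v) = k1 * x + k0).
  { intro x. unfold k1, k0, w. field. exact Ha. }
  destruct (affine_eq0_of_two_roots k1 k0 u v Huv) as [Hk1 Hk0].
  - rewrite <- Hdiff. lra.
  - rewrite <- Hdiff. lra.
  - exists w. intro x. specialize (Hdiff x). rewrite Hk1, Hk0 in Hdiff. lra.
Qed.

Lemma q_cubic (r theta x : R) :
  q r theta x = theta * x ^ 3 + (r - 2 * theta) * x ^ 2 + (theta - r) * x + 1.
Proof. unfold q. ring. Qed.

Lemma q_continuity (r theta : R) : continuity (q r theta).
Proof. unfold q. reg. Qed.

Lemma q_at_0 (r theta : R) : q r theta 0 = 1.
Proof. unfold q. ring. Qed.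

Lemma q_at_1 (r theta : R) : q r theta 1 = 1.
Proof. unfold q. ring. Qed.

Lemma q_at_m1 (r theta : R) : q r theta (-1) = 1 + 2 * r - 4 * theta.
Proof. unfold q. ring. Qed.

Lemma q_at_056 (r theta : R) :
  q r theta (56 / 100) = 1 - 2464 / 10000 * r + 108416 / 1000000 * theta.
Proof. unfold q. field. Qed.

Theorem mainTheorem7 (r theta : R) :
  4999 / 1000 <= r <= 5 -> 1 <= theta <= 213 / 100 ->
  exists alpha beta gamma : R,
    alpha < -1 /\ 0 < gamma /\ gamma < 56 / 100 /\ 56 / 100 < beta /\ beta < 1 /\
    (forall x : R, q r theta x = theta * (x - alpha) * (x - beta) * (x - gamma)).
Proof.
  intros Hr Htheta.
  assert (Hneg : q r theta (56 / 100) < 0) by (rewrite q_at_056; lra).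
  destruct (IVT_strict (q r theta) 0 (56 / 100)) as [gamma [Hgamma Hqgamma]].
  { apply q_continuity. } { lra. } { rewrite q_at_0. lra. }
  destruct (IVT_strict (q r theta) (56 / 100) 1) as [beta [Hbeta Hqbeta]].
  { apply q_continuity. } { lra. } { rewrite q_at_1. lra. }
  rewrite q_cubic in Hqgamma, Hqbeta.
  destruct (cubic_factor_of_two_roots theta (r - 2 * theta) (theta - r) 1 beta gamma)
    as [alpha Hfactor]; try lra.
  assert (Hq : forall x, q r theta x = theta * (x - alpha) * (x - beta) * (x - gamma)).
  { intro x. rewrite q_cubic. apply Hfactor. }
  assert (Halpha : alpha < -1).
  { assert (Hm1 : 0 < q r theta (-1)) by (rewrite q_at_m1; lra).
    rewrite Hq in Hm1.
    assert (Hpos : 0 < theta * ((-1 - beta) * (-1 - gamma))).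
    { apply Rmult_lt_0_compat; nra. }
    nra. }
  exists alpha, beta, gamma.
  repeat split; lra || exact Hq.
Qed.
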